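(* Let $p\in(0,1)$ and let $(\lambda_n)_{n\ge1}$ be a sequence with $\lambda_1=1$ and $0\le\lambda_n\le\lambda_{n-1}$ for all $n>1$. Let $r_1,r_2,\dots$ be $\{0,1\}$-valued random variables with $\Pr(r_1=1)=p$ and, for every $n\ge2$, $\Pr(r_n=1\mid r_1,\dots,r_{n-1})=\lambda_n p+(1-\lambda_n)\bar p_{n-1}$, where $\bar p_m=\frac1m\sum_{i=1}^m r_i$. Then \[\lim_{n\to\infty}\mathbb{E}\big[(\bar p_n-p)^2\big]=\lim_{n\to\infty}p(1-p)\sum_{i=1}^{n-1}\frac{1}{i(i+1)}\prod_{j=i+1}^{n-1}\Big(1-\frac{2\lambda_j}{j+1}\Big).\] *)

From HB Require Import structures.
From mathcomp Require Import all_boot all_order all_algebra.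
From mathcomp Require Import all_classical all_reals all_analysis.
Set Implicit Arguments. Unset Strict Implicit. Unset Printing Implicit Defensive.
Import Order.TTheory GRing.Theory Num.Theory.
Import numFieldNormedType.Exports.
Local Open Scope classical_set_scope.
Local Open Scope ring_scope.

Definition pbar {T : Type} {R : realType} (r : nat -> T -> bool) (m : nat) (t : T) : R :=
  (m%:R)^-1 * \sum_(1 <= i < m.+1) ((r i t)%:R : R).

Definition hist_event {T : Type} (r : nat -> T -> bool) (n : nat) (b : nat -> bool) : set T :=
  [set t | forall i, (1 <= i < n)%N -> r i t = b i].

Definition bmean {R : realType} (b : nat -> bool) (m : nat) : R :=
  (m%:R)^-1 * \sum_(1 <= i < m.+1) ((b i)%:R : R).

Definition rhs_seq {R : realType} (p : R) (lam : nat -> R) (n : nat) : R :=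
  p * (1 - p) * \sum_(1 <= i < n)
     ((i%:R * (i.+1)%:R)^-1 * \prod_(i.+1 <= j < n) (1 - 2 * lam j / (j.+1)%:R)).

(* Let D_n = r_1 + ... + r_n - n p, so that pbar_n - p = D_n / n.  Given the
   past, r_{n+1} = 1 with probability p + k_n D_n where k_n = (1 - lam_{n+1}) / n,
   hence E[D_n] = 0 and E[D_{n+1}^2] = (1 + 2 k_n) E[D_n^2] + p (1 - p).  All
   these expectations are finite sums over the 2^n histories weighted by their
   probabilities.  The recurrence is solved by E[D_n^2] = n (n + 1) s_{n+1}, where
   s is the right-hand sequence, so E[(pbar_n - p)^2] = (1 + 1/n) s_{n+1}.
   Finally s_{n+1} + p (1 - p) / (n + 1) is nonnegative and nonincreasing, so s
   converges, and both sides have its limit. *)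

From HB Require Import structures.
From mathcomp Require Import all_boot all_order all_algebra.
From mathcomp Require Import all_classical all_reals all_analysis.
From mathcomp Require Import ring lra measurable_realfun.
Set Implicit Arguments.
Unset Strict Implicit.
Unset Printing Implicit Defensive.
Import Order.TTheory GRing.Theory Num.Theory.
Import numFieldNormedType.Exports.
Local Open Scope classical_set_scope.
Local Open Scope ring_scope.

Definition hist_upd (b : nat -> bool) (k : nat) (v : bool) : nat -> bool :=
  fun i => if i == k then v else b i.

Lemma hist_upd_id b k : hist_upd b k (b k) = b.
Proof. by apply: funext => i; rewrite /hist_upd; case: eqP => [->|]. Qed.

(* [hsum n F] sums [F b] over the [2 ^ n] histories [b] whose entries
   [b 1], ..., [b n] are free and whose other entries are [false]. *)
Fixpoint hsum {V : nmodType} (n : nat) (F : (nat -> bool) -> V) : V :=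
  if n is m.+1 then hsum m (fun b => F (hist_upd b n true) + F (hist_upd b n false))
  else F (fun _ => false).

Lemma eq_hsum {V : nmodType} n (F G : (nat -> bool) -> V) :
  F =1 G -> hsum n F = hsum n G.
Proof.
by elim: n F G => [|n IH] F G FG /=; [exact: FG | apply: IH => b; rewrite !FG].
Qed.

Lemma hsumD {V : nmodType} n (F G : (nat -> bool) -> V) :
  hsum n (fun b => F b + G b) = hsum n F + hsum n G.
Proof.
elim: n F G => [|n IH] F G //=.
by rewrite -IH; apply: eq_hsum => b; rewrite addrACA.
Qed.

Lemma hsumZ {R : pzSemiRingType} n (a : R) (F : (nat -> bool) -> R) :
  hsum n (fun b => a * F b) = a * hsum n F.
Proof.
elim: n F => [|n IH] F //=.
by rewrite -IH; apply: eq_hsum => b; rewrite mulrDr.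
Qed.

Section LinearReinforcement.
Variables (R : comPzRingType) (p : R).

Definition dev (n : nat) (b : nat -> bool) : R :=
  \sum_(1 <= i < n.+1) (b i)%:R - n%:R * p.

Lemma dev0 b : dev 0 b = 0.
Proof. by rewrite /dev big_geq // mul0r subrr. Qed.

Lemma dev_upd n b v : dev n.+1 (hist_upd b n.+1 v) = dev n b + v%:R - p.
Proof.
rewrite /dev big_nat_recr //= {2}/hist_upd eqxx.
rewrite (eq_big_nat _ _ (F2 := fun i => (b i)%:R)); last first.
  by move=> i /andP[_ ltin]; rewrite /hist_upd ifN // neq_ltn ltin.
by rewrite -natr1; ring.
Qed.

Variables (k : nat -> R) (w : nat -> (nat -> bool) -> R).

(* [w n b] stands for the probability of the history [b 1], ..., [b n]. *)
Hypothesis w0 : forall b, w 0 b = 1.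
Hypothesis w_true :
  forall n b, w n.+1 (hist_upd b n.+1 true) = (p + k n * dev n b) * w n b.
Hypothesis w_false :
  forall n b, w n.+1 (hist_upd b n.+1 false) = (1 - (p + k n * dev n b)) * w n b.

Lemma hsum_weightS n F :
  hsum n.+1 (fun b => F b * w n.+1 b) =
  hsum n (fun b => ((p + k n * dev n b) * F (hist_upd b n.+1 true) +
                   (1 - (p + k n * dev n b)) * F (hist_upd b n.+1 false)) * w n b).
Proof. by rewrite /=; apply: eq_hsum => b; rewrite w_true w_false; ring. Qed.

Lemma hsum_weight n : hsum n (w n) = 1.
Proof.
elim: n => [|n IH]; first exact: w0.
transitivity (hsum n.+1 (fun b => 1 * w n.+1 b)).
  by apply: eq_hsum => b; rewrite mul1r.
by rewrite hsum_weightS -[RHS]IH; apply: eq_hsum => b; ring.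
Qed.

Lemma hsum_dev n : hsum n (fun b => dev n b * w n b) = 0.
Proof.
elim: n => [|n IH]; first by rewrite /= dev0 mul0r.
rewrite hsum_weightS (eq_hsum _ (G := fun b => (1 + k n) * (dev n b * w n b))).
  by rewrite hsumZ IH mulr0.
by move=> b; rewrite !dev_upd /=; ring.
Qed.

Lemma hsum_dev2S n :
  hsum n.+1 (fun b => dev n.+1 b ^+ 2 * w n.+1 b) =
  (1 + 2 * k n) * hsum n (fun b => dev n b ^+ 2 * w n b) + p * (1 - p).
Proof.
rewrite hsum_weightS (eq_hsum _ (G := fun b =>
  (1 + 2 * k n) * (dev n b ^+ 2 * w n b) +
  (p * (1 - p) * w n b + k n * (1 - 2 * p) * (dev n b * w n b)))).
  by rewrite !hsumD !hsumZ hsum_weight hsum_dev mulr0 mulr1 addr0.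
by move=> b; rewrite !dev_upd /=; ring.
Qed.

End LinearReinforcement.

Section RhsSeq.
Variables (R : realType) (p : R) (lam : nat -> R).

Lemma bmeanE n b : (0 < n)%N -> bmean b n = p + dev p n b / n%:R.
Proof.
move=> n_gt0; have n_neq0 : n%:R != 0 :> R by rewrite pnatr_eq0 -lt0n.
by rewrite /bmean /dev; field.
Qed.

Lemma cond_probE (l : R) n b : (0 < n)%N ->
  l * p + (1 - l) * bmean b n = p + (1 - l) / n%:R * dev p n b.
Proof. by move=> n_gt0; rewrite bmeanE //; ring. Qed.

Lemma rhs_seqS m : (0 < m)%N ->
  rhs_seq p lam m.+1 =
  rhs_seq p lam m * (1 - 2 * lam m / m.+1%:R) + p * (1 - p) / (m%:R * m.+1%:R).
Proof.
move=> m_gt0; rewrite /rhs_seq big_nat_recr //=.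
rewrite [\prod_(m.+1 <= j < m.+1) _]big_geq // mulr1.
set f := fun j => 1 - 2 * lam j / j.+1%:R.
have -> : \sum_(1 <= i < m) (i%:R * i.+1%:R)^-1 * \prod_(i.+1 <= j < m.+1) f j =
    (\sum_(1 <= i < m) (i%:R * i.+1%:R)^-1 * \prod_(i.+1 <= j < m) f j) * f m.
  rewrite big_distrl /=; apply: eq_big_nat => i /andP[_ ltim].
  by rewrite big_nat_recr //= mulrA.
by rewrite /f; ring.
Qed.

Lemma rhs_seq_rec_sol (a : nat -> R) :
  a 0%N = 0 ->
  (forall n, a n.+1 = (1 + 2 * ((1 - lam n.+1) / n%:R)) * a n + p * (1 - p)) ->
  forall n, a n = n%:R * n.+1%:R * rhs_seq p lam n.+1.
Proof.
move=> a0 aS; elim=> [|[|n] IH]; first by rewrite a0 !mul0r.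
  by rewrite aS a0 mulr0 add0r /rhs_seq big_nat1 big_geq // mulr1 mul1r; field.
rewrite aS IH (rhs_seqS (m := n.+2)) //.
have n1_neq0 : n.+1%:R != 0 :> R by rewrite pnatr_eq0.
rewrite -[n.+3]addn2 -[n.+2]addn1 !natrD.
have n_ge0 : 0 <= n.+1%:R :> R := ler0n _ _.
by field; apply/and3P; split; apply/eqP; lra.
Qed.

Lemma rhs_seq_ge0 n : 0 <= p <= 1 -> (forall j, (1 < j)%N -> lam j <= 1) ->
  0 <= rhs_seq p lam n.
Proof.
move=> /andP[p_ge0 p_le1] lam_le1; apply: mulr_ge0.
  by apply: mulr_ge0; rewrite ?subr_ge0.
rewrite big_nat_cond; apply: sumr_ge0 => i /andP[/andP[i_ge1 _] _].
apply: mulr_ge0; first by rewrite invr_ge0 mulr_ge0.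
rewrite big_nat_cond; apply: prodr_ge0 => j /andP[/andP[ltij _] _].
have j_gt1 : (1 < j)%N by apply: leq_ltn_trans ltij.
have j3 : 3 <= j.+1%:R :> R by rewrite ler_nat.
rewrite subr_ge0 ler_pdivrMr ?ltr0Sn // mul1r.
by have := lam_le1 _ j_gt1; lra.
Qed.

(* [rhs_seq (m + 1) + p (1 - p) / (m + 1)] decreases by
   [2 lam (m + 1) rhs_seq (m + 1) / (m + 2)] at each step. *)
Lemma cvgn_rhs_seq : 0 <= p <= 1 -> (forall j, (1 < j)%N -> 0 <= lam j <= 1) ->
  cvgn (rhs_seq p lam).
Proof.
move=> p01 lam01.
have lam_le1 j (j_gt1 : (1 < j)%N) : lam j <= 1 by case/andP: (lam01 j j_gt1).
pose q := p * (1 - p).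
have q_ge0 : 0 <= q by case/andP: p01 => p0 p1; rewrite mulr_ge0 ?subr_ge0.
pose u m := rhs_seq p lam m.+1 + q / m.+1%:R.
have u_noninc : nonincreasing_seq u.
  apply/nonincreasing_seqP => m; rewrite /u (rhs_seqS (m := m.+1)) //.
  have lam_rhs_ge0 : 0 <= lam m.+1 * rhs_seq p lam m.+1.
    case: m => [|m]; first by rewrite /rhs_seq big_geq // !mulr0.
    by case/andP: (lam01 m.+2 isT) => lam_ge0 _; rewrite mulr_ge0 ?rhs_seq_ge0.
  set s := rhs_seq p lam m.+1.
  have m1_gt0 : 0 < m.+1%:R :> R := ltr0Sn _ _.
  have -> : s * (1 - 2 * lam m.+1 / m.+2%:R) + p * (1 - p) / (m.+1%:R * m.+2%:R) +
      q / m.+2%:R = s + q / m.+1%:R - 2 * lam m.+1 * s / m.+2%:R.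
    by rewrite /q -natr1; field; apply/andP; split; apply/eqP; lra.
  by rewrite gerBl divr_ge0 // -mulrA mulr_ge0.
have u_lb : has_lbound (range u).
  by exists 0 => _ [m _ <-]; rewrite addr_ge0 ?divr_ge0 ?rhs_seq_ge0.
have /cvg_ex[l ul] := nonincreasing_is_cvgn u_noninc u_lb.
have rhsS_l : (fun m => rhs_seq p lam m.+1) @ \oo --> l.
  have -> : (fun m => rhs_seq p lam m.+1) = u - (fun m => q * harmonic m).
    by apply/funext => m; rewrite /u /= addrK.
  rewrite -[l]subr0 -(mulr0 q); apply: cvgB => //.
  by apply: cvgM; [exact: cvg_cst | exact: cvg_harmonic].
by apply/cvg_ex; exists l; rewrite -cvg_shiftS.
Qed.

End RhsSeq.

Lemma lam_ge0_le1 {R : realType} (lam : nat -> R) :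
  lam 1%N = 1 -> (forall n, (1 < n)%N -> 0 <= lam n /\ lam n <= lam n.-1) ->
  forall j, (1 < j)%N -> 0 <= lam j <= 1.
Proof.
move=> lam1 lam_mon; elim=> // j IH j_gt1.
have [-> lam_le] := lam_mon _ j_gt1; apply: le_trans lam_le _.
by case: j IH j_gt1 => [|[|j]] // IH _; [rewrite lam1 | case/andP: (IH isT)].
Qed.

Lemma indic_eqb {R : realType} {T : Type} (f : T -> bool) v t :
  \1_[set s | f s = v] t = (f t == v)%:R :> R.
Proof.
by rewrite indicE; case: (f t =P v) => fv; [rewrite mem_set | rewrite memNset].
Qed.

Section Histories.
Variables (T : Type) (r : nat -> T -> bool).

Lemma hist_event_le1 n b : (n <= 1)%N -> hist_event r n b = setT.
Proof.
move=> n_le1; apply/seteqP; split=> // t _ i /andP[i_ge1 ltin].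
by have := leq_trans ltin n_le1; rewrite ltnS leqNgt i_ge1.
Qed.

Lemma hist_eventS n b v :
  hist_event r n.+2 (hist_upd b n.+1 v) =
  hist_event r n.+1 b `&` [set t | r n.+1 t = v].
Proof.
apply/seteqP; split=> t; rewrite /hist_event /=.
  move=> rb; split; last by have := rb n.+1; rewrite /hist_upd eqxx leqnn; apply.
  move=> i /andP[i_ge1 ltin]; have := rb i.
  by rewrite i_ge1 /hist_upd ifN ?neq_ltn ?ltin //; apply; rewrite ltnW.
move=> [rb rv] i /andP[i_ge1]; rewrite ltnS leq_eqVlt /hist_upd.
by case: eqP => [->|_ /= ltin] //; apply: rb; rewrite i_ge1.
Qed.

Definition hist_trunc (n : nat) (a : nat -> bool) : nat -> bool :=
  fun i => if (0 < i <= n)%N then a i else false.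

Lemma pbarE {R : realType} n t :
  pbar r n t = bmean (hist_trunc n (r^~ t)) n :> R.
Proof.
rewrite /pbar /bmean; congr (_ * _); apply: eq_big_nat => i /andP[i_ge1 ltin].
by rewrite /hist_trunc i_ge1 -ltnS ltin.
Qed.

Lemma hsum_indic {R : realType} n (F : (nat -> bool) -> R) t :
  hsum n (fun b => F b * \1_(hist_event r n.+1 b) t) = F (hist_trunc n (r^~ t)).
Proof.
elim: n F => [|n IH] F /=.
  rewrite hist_event_le1 // indicE mem_set // mulr1; congr F.
  by apply: funext => -[|i].
rewrite (eq_hsum _ (G := fun b => F (hist_upd b n.+1 (r n.+1 t)) *
                                  \1_(hist_event r n.+1 b) t)).
  rewrite IH; congr F; apply: funext => i; rewrite /hist_upd /hist_trunc.
  case: eqP => [->|/eqP neq_in]; first by rewrite leqnn.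
  by rewrite (leq_eqVlt i n.+1) ltnS (negbTE neq_in).
move=> b; rewrite !hist_eventS !indicI /= !indic_eqb.
by case: (r n.+1 t) => /=; ring.
Qed.

End Histories.

Lemma integral_hsum {R : realType} d (T : measurableType d) (mu : measure T R) n
    (G : (nat -> bool) -> T -> R) (g : (nat -> bool) -> R) :
  (forall b t, 0 <= G b t) -> (forall b, measurable_fun setT (G b)) ->
  (forall b, (\int[mu]_t (G b t)%:E = (g b)%:E)%E) ->
  (\int[mu]_t (hsum n (fun b => G b t))%:E = (hsum n g)%:E)%E.
Proof.
elim: n G g => [|n IH] G g G_ge0 mG intG /=; first exact: intG.
apply: (IH (fun b t => G (hist_upd b n.+1 true) t + G (hist_upd b n.+1 false) t)).
- by move=> b t; rewrite addr_ge0.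
- by move=> b; apply: measurable_funD.
- move=> b; under eq_integral do rewrite EFinD.
  rewrite ge0_integralD // ?intG -?EFinD //; do 2?[by move=> t _; rewrite lee_fin].
  all: by apply/measurable_EFinP.
Qed.

Section HistoryProbabilities.
Variables (R : realType) (d : measure_display) (T : measurableType d).
Variables (P : probability T R) (r : nat -> T -> bool).
Hypothesis mr : forall n, measurable [set t | r n t].

Lemma measurable_hist_val n v : measurable [set t | r n t = v].
Proof.
case: v; first exact: mr.
rewrite (_ : [set t | r n t = false] = ~` [set t | r n t]); first exact: measurableC.
by apply/seteqP; split=> t /=; case: (r n t).
Qed.

Lemma measurable_hist_event n b : measurable (hist_event r n b).
Proof.
elim: n => [|[|n] IH]; try by rewrite hist_event_le1.
rewrite -[X in hist_event _ _ X](hist_upd_id b n.+1) hist_eventS.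
exact: measurableI IH (measurable_hist_val _ _).
Qed.

(* The event [hist_event r n.+1 b] fixes [r 1], ..., [r n]. *)
Definition hist_prob (n : nat) (b : nat -> bool) : R :=
  fine (P (hist_event r n.+1 b)).

Lemma hist_prob0 b : hist_prob 0 b = 1.
Proof. by rewrite /hist_prob hist_event_le1 // probability_setT. Qed.

Lemma fin_num_hist_event n b : P (hist_event r n b) \is a fin_num.
Proof. exact/fin_num_measure/measurable_hist_event. Qed.

Lemma expectation_hist n (F : (nat -> bool) -> R) : (forall b, 0 <= F b) ->
  (\int[P]_t (F (hist_trunc n (r^~ t)))%:E =
   (hsum n (fun b => F b * hist_prob n b))%:E)%E.
Proof.
move=> F_ge0; under eq_integral do rewrite -(hsum_indic r n F).
have mH b := measurable_hist_event n.+1 b.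
apply: integral_hsum => [b t | b | b].
- by rewrite mulr_ge0 // indicE ler0n.
- exact/measurable_funM/measurable_indic.
- rewrite (integralZl_indic _ (fun _ => hist_event r n.+1 b)) //; last first.
    by move=> /lt_geF; rewrite F_ge0.
  rewrite integral_indic ?setIT // EFinM fineK //.
  exact: fin_num_hist_event.
Qed.

Lemma expectation_sq_dev (p : R) n : (0 < n)%N ->
  (\int[P]_t ((pbar r n t - p) ^+ 2)%:E =
   (hsum n (fun b => dev p n b ^+ 2 * hist_prob n b) / n%:R ^+ 2)%:E)%E.
Proof.
move=> n_gt0.
under eq_integral do rewrite pbarE (bmeanE p) // addrAC subrr add0r.
rewrite (@expectation_hist n (fun b => (dev p n b / n%:R) ^+ 2)); last first.
  by move=> b; apply: sqr_ge0.
by congr EFin; rewrite mulrC -hsumZ; apply: eq_hsum => b; rewrite -exprVn; ring.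
Qed.

Variable c : nat -> (nat -> bool) -> R.
Hypothesis P_next : forall n b,
  P (hist_event r n.+1 b `&` [set t | r n.+1 t]) =
  ((c n b)%:E * P (hist_event r n.+1 b))%E.

Lemma hist_prob_true n b :
  hist_prob n.+1 (hist_upd b n.+1 true) = c n b * hist_prob n b.
Proof.
by rewrite /hist_prob hist_eventS P_next -(fineK (fin_num_hist_event _ _)) -EFinM.
Qed.

Lemma hist_prob_false n b :
  hist_prob n.+1 (hist_upd b n.+1 false) = (1 - c n b) * hist_prob n b.
Proof.
rewrite /hist_prob hist_eventS.
rewrite (_ : _ `&` _ = hist_event r n.+1 b `\` [set t | r n.+1 t]); last first.
  by apply/seteqP; split=> t /= [rb]; case: (r n.+1 t).
rewrite measureD ?ltey_eq ?fin_num_hist_event //; last exact: measurable_hist_event.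
rewrite [X in fine (_ - X)]P_next.
rewrite fineB ?fin_numM ?fin_num_hist_event // fineM ?fin_num_hist_event //=.
by rewrite mulrBl mul1r.
Qed.

End HistoryProbabilities.

Theorem theoremA5 (R : realType) (d : measure_display) (T : measurableType d)
  (P : probability T R) (p : R) (lam : nat -> R) (r : nat -> T -> bool) :
  0 < p < 1 ->
  lam 1%N = 1 ->
  (forall n : nat, (1 < n)%N -> 0 <= lam n /\ lam n <= lam n.-1) ->
  (forall n : nat, measurable [set t | r n t]) ->
  P [set t | r 1%N t] = p%:E ->
  (forall (n : nat) (b : nat -> bool), (2 <= n)%N ->
     P (hist_event r n b `&` [set t | r n t]) =
     ((lam n * p + (1 - lam n) * bmean b n.-1)%:E * P (hist_event r n b))%E) ->
  exists l : R,
    (fun n : nat => (\int[P]_t ((pbar r n t - p) ^+ 2)%:E)%E) @ \oo --> l%:E /\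
    rhs_seq p lam @ \oo --> l.
Proof.
move=> /andP[p_gt0 p_lt1] lam1 lam_mon mr P_r1 P_cond.
pose k n := (1 - lam n.+1) / n%:R.
have P_next n b : P (hist_event r n.+1 b `&` [set t | r n.+1 t]) =
    ((p + k n * dev p n b)%:E * P (hist_event r n.+1 b))%E.
  case: n => [|n]; last by rewrite P_cond // cond_probE.
  by rewrite hist_event_le1 // setTI P_r1 probability_setT dev0 mulr0 addr0 mule1.
pose a n := hsum n (fun b => dev p n b ^+ 2 * hist_prob P r n b).
have a_rhs : forall n, a n = n%:R * n.+1%:R * rhs_seq p lam n.+1.
  apply: rhs_seq_rec_sol => [|n]; first by rewrite /a /= dev0 expr2 !mul0r.
  exact: (hsum_dev2S (hist_prob0 P r) (hist_prob_true mr P_next)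
                     (hist_prob_false mr P_next)).
have /cvg_ex[l rhs_l] : cvgn (rhs_seq p lam).
  by apply: cvgn_rhs_seq (lam_ge0_le1 lam1 lam_mon); rewrite !ltW.
exists l; split=> //; rewrite -cvg_shiftS.
have -> : [sequence (\int[P]_t ((pbar r n.+1 t - p) ^+ 2)%:E)%E]_n =
          (fun n => ((1 + harmonic n) * rhs_seq p lam n.+2)%:E).
  apply/funext => n; rewrite /= expectation_sq_dev // -/(a n.+1) a_rhs.
  have n1_neq0 : n.+1%:R != 0 :> R by rewrite pnatr_eq0.
  by congr EFin; rewrite -[n.+2%:R]natr1; field.
apply: cvg_EFin; first exact: nearW.
have -> : l = (1 + 0) * l by rewrite addr0 mul1r.
apply: cvgM; first by apply: cvgD; [exact: cvg_cst | exact: cvg_harmonic].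
by have := rhs_l; rewrite -2!cvg_shiftS.
Qed.
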